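(* Let $\mathbb{F}$ be a field of characteristic not $2$ and let $\Phi: M_n(\mathbb{F}) \to M_r(\mathbb{F})$ be a linear map sending idempotents to idempotents. Then $\Phi$ is a Jordan homomorphism, and there exist an invertible $S \in M_r(\mathbb{F})$ and nonnegative integers $k_1,k_2$ with $t = r - nk_1 - nk_2 \ge 0$ such that $$\Phi(A) = S\begin{pmatrix} I_{k_1}\otimes A & & \\ & I_{k_2}\otimes A^{\mathrm t} & \\ & & 0_t\end{pmatrix}S^{-1}\quad\text{for all } A\in M_n(\mathbb{F}).$$
   Context: A linear map $\Phi$ is a Jordan homomorphism if $\Phi(AB+BA) = \Phi(A)\Phi(B)+\Phi(B)\Phi(A)$ for all $A,B$. $I_k\otimes A$ denotes $A\oplus\cdots\oplus A$ ($k$ copies); $A^{\mathrm t}$ is the transpose. Unspecified blocks are zero. *)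

From HB Require Import structures.
From mathcomp Require Import all_boot all_order all_algebra.
Set Implicit Arguments. Unset Strict Implicit. Unset Printing Implicit Defensive.
Import GRing.Theory.
Local Open Scope ring_scope.

(* I_k (x) A = A (+) ... (+) A (k copies), an (k*n) x (k*n) block diagonal matrix:
   entry (i,j) is A (i mod n) (j mod n) when i and j lie in the same n-block, else 0. *)
(* residue of m modulo n as an element of 'I_n (for n = 0 the type 'I_0 is
   empty, but then it is never used: the index type 'I_(k*0) is empty too). *)
Definition ord_mod (n : nat) (m : nat) : 'I_n.+1 := Ordinal (ltn_pmod m (ltn0Sn n)).
Definition kron_id {F : pzRingType} (k n : nat) : 'M[F]_n -> 'M[F]_(k * n) :=
  match n with
  | 0 => fun _ => 0
  | n'.+1 => fun A : 'M[F]_n'.+1 =>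
      \matrix_(i < k * n'.+1, j < k * n'.+1)
        if (i %/ n'.+1 == j %/ n'.+1)%N then A (ord_mod n' i) (ord_mod n' j) else 0
  end.

(* The block-diagonal matrix diag(I_k1 (x) A, I_k2 (x) A^t, 0_t) with t = r - n k1 - n k2,
   viewed as an r x r matrix (when n k1 + n k2 <= r the dimensions agree exactly;
   conform_mx is only used to give it the type 'M_r). *)
Definition std_form {F : pzRingType} (n r k1 k2 : nat) (A : 'M[F]_n) : 'M[F]_r :=
  conform_mx (0 : 'M[F]_r)
    (block_mx (block_mx (kron_id k1 A) 0 0 (kron_id k2 A^T)) 0 0
              (0 : 'M[F]_(r - (n * k1 + n * k2)))).

Definition jordan_hom {F : pzRingType} (n r : nat) (Phi : 'M[F]_n -> 'M[F]_r) : Prop :=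
  forall A B : 'M[F]_n,
    Phi (A *m B + B *m A) = Phi A *m Phi B + Phi B *m Phi A.

From HB Require Import structures.
From mathcomp Require Import all_boot all_order all_algebra.
Set Implicit Arguments. Unset Strict Implicit. Unset Printing Implicit Defensive.
Import GRing.Theory.
Local Open Scope ring_scope.

(* Let D A B := Phi A Phi B + Phi B Phi A - Phi (A B + B A), a symmetric bilinear
   form. Idempotent preservation gives D E E = 0 for every idempotent E; applied to
   the idempotents E + N and E - N (E N + N E = N, N^2 = 0) and to sums of such, it
   kills D on every pair of matrix units, so Phi is a Jordan homomorphism.
   For a Jordan homomorphism the images P a of the e_aa are orthogonal idempotents,
   and the Peirce pieces H a c := P a Phi(e_ac) P c and K a c := P a Phi(e_ca) P c
   form two mutually orthogonal systems of matrix units with Phi(e_ij) = H_ij + K_ji.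
   A system of n x n matrix units in M_r is conjugate to I_k (x) e_ij, where k is the
   rank of a diagonal unit; placing the two systems and a basis of the complementary
   idempotent side by side yields S. *)

Section CharNot2.
Variable F : fieldType.
Hypothesis char2 : (2%:R : F) != 0.

Lemma mx_double_eq0 m p (X : 'M[F]_(m, p)) : X + X = 0 -> X = 0.
Proof.
move=> XX0; have : (2%:R : F) *: X = 0 by rewrite scaler_nat mulr2n.
by move/eqP; rewrite scaler_eq0 (negPf char2) => /eqP.
Qed.

Lemma mx_double_inj m p (X Y : 'M[F]_(m, p)) : X + X = Y + Y -> X = Y.
Proof.
move=> eqXY; apply/eqP; rewrite -subr_eq0; apply/eqP/mx_double_eq0.
by rewrite -addrACA -opprD eqXY subrr.
Qed.

End CharNot2.

Ltac neq_rewrite := repeat match goal with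
  | H : is_true (?a != ?b) |- context [?a == ?b] => rewrite (negbTE H)
  | H : is_true (?a != ?b) |- context [?b == ?a] => rewrite [b == a]eq_sym (negbTE H)
  end.

Ltac delta_simpl :=
  rewrite ?(mulmxDl, mulmxDr, mulmxBl, mulmxBr, mulmxN, mulNmx);
  do 2 (rewrite ?mul_delta_mx_cond; neq_rewrite;
        rewrite ?(eqxx, mulr1n, mulr0n, mul0mx, mulmx0));
  rewrite ?(addr0, add0r, subr0, sub0r, oppr0, opprK).

Section IdempotentPreserving.
Variables (F : fieldType) (n r : nat).
Hypothesis char2 : (2%:R : F) != 0.
Variable Phi : {linear 'M[F]_n -> 'M[F]_r}.
Hypothesis Phi_idem : forall A, A *m A = A -> Phi A *m Phi A = Phi A.

Definition jordan_defect (A B : 'M[F]_n) :=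
  Phi A *m Phi B + Phi B *m Phi A - Phi (A *m B + B *m A).
Local Notation D := jordan_defect.

Lemma jordan_defectC A B : D A B = D B A.
Proof. by rewrite /D [Phi B *m _ + _]addrC [B *m A + _]addrC. Qed.

Lemma jordan_defectDl A A' B : D (A + A') B = D A B + D A' B.
Proof.
rewrite /D !raddfD /= !mulmxDl !raddfD /= (addrACA (Phi A *m Phi B)).
by rewrite (addrACA (- Phi (A *m B))) [LHS]addrACA.
Qed.

Lemma jordan_defectZl c A B : D (c *: A) B = c *: D A B.
Proof. by rewrite /D !linearZ /= -!scalemxAl -!scalerDr linearZ /= scalerBr. Qed.

Lemma jordan_defectDr A B B' : D A (B + B') = D A B + D A B'.
Proof. by rewrite jordan_defectC jordan_defectDl !(jordan_defectC A). Qed.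

Lemma jordan_defectNl A B : D (- A) B = - D A B.
Proof. by rewrite -scaleN1r jordan_defectZl scaleN1r. Qed.

Lemma jordan_defectNr A B : D A (- B) = - D A B.
Proof. by rewrite jordan_defectC jordan_defectNl jordan_defectC. Qed.

Lemma jordan_defect_suml I (s : seq I) (P : pred I) (f : I -> 'M[F]_n) B :
  D (\sum_(x <- s | P x) f x) B = \sum_(x <- s | P x) D (f x) B.
Proof.
apply: (big_morph (D^~ B) (fun x y => jordan_defectDl x y B)).
by rewrite -(scale0r (0 : 'M[F]_n)) jordan_defectZl scale0r.
Qed.

Lemma jordan_defect_idem E : E *m E = E -> D E E = 0.
Proof. by move=> EE; rewrite /D EE Phi_idem // raddfD subrr. Qed.

Lemma jordan_defect_orth E E' :
  E *m E = E -> E' *m E' = E' -> E *m E' = 0 -> E' *m E = 0 -> D E E' = 0.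
Proof.
move=> EE E'E' EE' E'E; apply: (mx_double_eq0 char2).
have := @jordan_defect_idem (E + E').
rewrite jordan_defectDl !jordan_defectDr !jordan_defect_idem // add0r addr0.
by rewrite (jordan_defectC E') => -> //; rewrite mulmxDl !mulmxDr EE E'E' EE' E'E addr0 add0r.
Qed.

(* With [E N + N E = N] and [N^2 = 0], both [E + N] and [E - N] are idempotent. *)
Lemma jordan_defect_nilpotent E N :
  E *m E = E -> E *m N + N *m E = N -> N *m N = 0 -> D E N = 0 /\ D N N = 0.
Proof.
move=> EE EN NN.
have expand (M : 'M[F]_n) : E *m M + M *m E = M -> M *m M = 0 ->
    D E M + D E M + D M M = 0.
  move=> EM MM; have idem : (E + M) *m (E + M) = E + M.
    by rewrite mulmxDl !mulmxDr EE MM addr0 -addrA EM.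
  rewrite -(jordan_defect_idem idem) jordan_defectDl !jordan_defectDr.
  by rewrite (jordan_defect_idem EE) add0r (jordan_defectC M E) [RHS]addrA.
have hp := expand N EN NN.
have hm := expand (- N); rewrite mulmxN mulNmx -opprD EN mulmxN mulNmx opprK in hm.
move: hm => /(_ erefl NN); rewrite jordan_defectNl !jordan_defectNr opprK.
move=> hm; have DNN : D N N = 0.
  apply: (mx_double_eq0 char2); move: (congr2 +%R hp hm).
  by rewrite addr0 addrACA -opprD addrN add0r.
by move: hp; rewrite DNN addr0 => /(mx_double_eq0 char2).
Qed.

Lemma jordan_defect_anticomm E N1 N2 :
  E *m E = E -> E *m N1 + N1 *m E = N1 -> E *m N2 + N2 *m E = N2 ->
  N1 *m N1 = 0 -> N2 *m N2 = 0 -> N1 *m N2 + N2 *m N1 = 0 -> D N1 N2 = 0.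
Proof.
move=> EE EN1 EN2 N1N1 N2N2 N1N2.
have EN : E *m (N1 + N2) + (N1 + N2) *m E = N1 + N2.
  by rewrite mulmxDr mulmxDl addrACA EN1 EN2.
have NN : (N1 + N2) *m (N1 + N2) = 0.
  by rewrite mulmxDl !mulmxDr N1N1 N2N2 add0r addr0.
have [_] := jordan_defect_nilpotent EE EN NN.
rewrite jordan_defectDl !jordan_defectDr (jordan_defectC N2 N1).
rewrite (proj2 (jordan_defect_nilpotent EE EN1 N1N1)) (proj2 (jordan_defect_nilpotent EE EN2 N2N2)).
by rewrite add0r addr0 => /(mx_double_eq0 char2).
Qed.

Local Notation e i j := (delta_mx i j : 'M[F]_n).

Lemma jordan_defect_diag_diag i k : D (e i i) (e k k) = 0.
Proof.
case: (eqVneq i k) => [<-|ik]; first by apply: jordan_defect_idem; rewrite mul_delta_mx.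
by apply: jordan_defect_orth; rewrite ?mul_delta_mx // mul_delta_mx_0 // eq_sym.
Qed.

Lemma jordan_defect_diag_off k i j : i != j -> D (e k k) (e i j) = 0.
Proof.
move=> ij; have Dii : D (e i i) (e i j) = 0.
  by have [] := @jordan_defect_nilpotent (e i i) (e i j); delta_simpl.
case: (eqVneq k i) => [-> //|ki].
case: (eqVneq k j) => [->|kj].
  by have [] := @jordan_defect_nilpotent (e j j) (e i j); delta_simpl.
have [] := @jordan_defect_nilpotent (e k k + e i i) (e i j); try by delta_simpl.
by rewrite jordan_defectDl Dii addr0.
Qed.

Lemma jordan_defect_off_diag i j k : i != j -> D (e i j) (e k k) = 0.
Proof. by move=> ij; rewrite jordan_defectC jordan_defect_diag_off. Qed.

Lemma jordan_defect_row i j l : i != j -> i != l -> D (e i j) (e i l) = 0.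
Proof. by move=> ij il; apply: (@jordan_defect_anticomm (e i i)); delta_simpl. Qed.

Lemma jordan_defect_col i j k : i != j -> k != j -> D (e i j) (e k j) = 0.
Proof. by move=> ij kj; apply: (@jordan_defect_anticomm (e j j)); delta_simpl. Qed.

Lemma jordan_defect_distinct i j k l : i != j -> k != l -> i != k -> j != l ->
  i != l -> j != k -> D (e i j) (e k l) = 0.
Proof.
by move=> ij kl ik jl il jk; apply: (@jordan_defect_anticomm (e i i + e k k)); delta_simpl.
Qed.

Lemma jordan_defect_swap i j : i != j -> D (e i j) (e j i) = 0.
Proof.
move=> ij; have [] := @jordan_defect_nilpotent (e i j + e j j) (e i i - e i j + e j i - e j j).
- by delta_simpl.
- by delta_simpl; rewrite subrr add0r subrr addr0 !addrA.
- delta_simpl; rewrite (addrC (- delta_mx i i)) (addrC (- delta_mx j i)).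
  by rewrite -[_ - delta_mx i i]opprB -[_ - delta_mx j i]opprB !subrr add0r subrr.
move=> + _; rewrite jordan_defectDl !jordan_defectDr !jordan_defectNr.
rewrite !jordan_defect_diag_diag (jordan_defect_row ij ij) !jordan_defect_off_diag //.
have ji : j != i by rewrite eq_sym.
by rewrite !jordan_defect_diag_off // !subr0 !add0r addr0.
Qed.

Lemma jordan_defect_chain i j l : i != j -> j != l -> i != l -> D (e i j) (e j l) = 0.
Proof.
move=> ij jl il; have ji : j != i by rewrite eq_sym.
have [] := @jordan_defect_nilpotent (e j j + e i j) (e j l + e i l); try by delta_simpl.
rewrite jordan_defectDl !jordan_defectDr !jordan_defect_diag_off //.
by rewrite (jordan_defect_row ij il) !add0r addr0.
Qed.

Lemma jordan_defect_off_off i j k l : i != j -> k != l -> D (e i j) (e k l) = 0.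
Proof.
move=> ij; case: (eqVneq k i) => [-> il|ki kl]; first exact: jordan_defect_row.
case: (eqVneq l j) kl => [-> kj|lj kl]; first exact: jordan_defect_col.
case: (eqVneq k j) kl => [-> jl|kj kl].
  case: (eqVneq l i) jl => [-> _|li jl]; first exact: jordan_defect_swap.
  by apply: jordan_defect_chain; rewrite // eq_sym.
case: (eqVneq l i) => [->|li].
  by rewrite jordan_defectC; apply: jordan_defect_chain; rewrite // eq_sym.
by apply: jordan_defect_distinct; rewrite // eq_sym.
Qed.

Lemma jordan_defect_delta i j k l : D (e i j) (e k l) = 0.
Proof.
case: (eqVneq i j) => [<-|ij]; case: (eqVneq k l) => [<-|kl].
- exact: jordan_defect_diag_diag.
- exact: jordan_defect_diag_off.
- exact: jordan_defect_off_diag.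
- exact: jordan_defect_off_off.
Qed.

Lemma jordan_defect0 A B : D A B = 0.
Proof.
rewrite (matrix_sum_delta A) jordan_defect_suml big1 // => i _.
rewrite jordan_defect_suml big1 // => j _.
rewrite jordan_defectZl jordan_defectC (matrix_sum_delta B) jordan_defect_suml big1 ?scaler0 // => k _.
rewrite jordan_defect_suml big1 // => l _.
by rewrite jordan_defectZl jordan_defectC jordan_defect_delta scaler0.
Qed.

Lemma idempotent_preserving_jordan : jordan_hom Phi.
Proof. by move=> A B; apply/esym/eqP; rewrite -subr_eq0 -/(D A B) jordan_defect0. Qed.

End IdempotentPreserving.

Lemma delta_mul_mx_delta (R : comPzRingType) m1 m2 m3 m4 (i : 'I_m1) (j : 'I_m2)
    (k : 'I_m3) (l : 'I_m4) (A : 'M[R]_(m2, m3)) :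
  delta_mx i j *m A *m delta_mx k l = A j k *: delta_mx i l.
Proof.
apply/matrixP => x y; rewrite !mxE (bigD1 k) //= big1 ?addr0; last first.
  by move=> b /negPf bk; rewrite !mxE bk ?andbF ?mulr0.
rewrite !mxE eqxx /= (bigD1 j) //= big1 ?addr0; last first.
  by move=> b /negPf bj; rewrite !mxE bj ?andbF ?mul0r.
rewrite !mxE !eqxx /= !andbT.
by case: (x == i); case: (y == l); rewrite /= ?mul1r ?mulr1 ?mul0r ?mulr0.
Qed.

Section JordanHom.
Variables (F : fieldType) (n r : nat).
Hypothesis char2 : (2%:R : F) != 0.
Variable Phi : {linear 'M[F]_n -> 'M[F]_r}.
Hypothesis Phi_jordan : jordan_hom Phi.

Lemma jordan_sqr A : Phi (A *m A) = Phi A *m Phi A.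
Proof. by apply: (mx_double_inj char2); rewrite -(linearD Phi) Phi_jordan. Qed.

Lemma jordan_triple A B : Phi (A *m B *m A) = Phi A *m Phi B *m Phi A.
Proof.
have := Phi_jordan A (A *m B + B *m A).
have -> : A *m (A *m B + B *m A) + (A *m B + B *m A) *m A =
    (A *m A *m B + B *m (A *m A)) + (A *m B *m A + A *m B *m A).
  by rewrite mulmxDr mulmxDl !mulmxA [A *m B *m A + _]addrC addrACA.
rewrite Phi_jordan (linearD Phi) Phi_jordan jordan_sqr (linearD Phi).
rewrite !mulmxDr !mulmxDl !mulmxA => expanded.
apply: (mx_double_inj char2).
apply: (addrI (Phi A *m Phi A *m Phi B + Phi B *m Phi A *m Phi A)).
by rewrite expanded (addrC (Phi A *m Phi B *m Phi A) (Phi B *m _ *m _)) addrACA.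
Qed.

Lemma jordan_triple2 A B C :
  Phi (A *m B *m C + C *m B *m A) = Phi A *m Phi B *m Phi C + Phi C *m Phi B *m Phi A.
Proof.
have := jordan_triple (A + C) B.
rewrite !mulmxDl !mulmxDr !(linearD Phi) !jordan_triple !mulmxDl !mulmxDr -!addrA.
by move/addrI; rewrite !addrA => /addIr.
Qed.

Local Notation e i j := (delta_mx i j : 'M[F]_n).
Local Notation P a := (Phi (e a a)).

(* The multiplicative and the product-reversing part of [Phi]: see [Phi_offdiag]. *)
Definition hom_unit a c := P a *m Phi (e a c) *m P c.
Definition anti_unit a c := P a *m Phi (e c a) *m P c.
Local Notation H := hom_unit.
Local Notation K := anti_unit.

Lemma Phi_diag_idem a : P a *m P a = P a.
Proof. by rewrite -jordan_sqr mul_delta_mx. Qed.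

Lemma Phi_diag_orth a c : a != c -> P a *m P c = 0.
Proof.
move=> ac; have ca : c != a by rewrite eq_sym.
have anti : P a *m P c + P c *m P a = 0.
  by rewrite -Phi_jordan !mul_delta_mx_0 // addr0 linear0.
have := congr1 (mulmx (P a)) anti.
rewrite mulmxDr !mulmxA Phi_diag_idem -jordan_triple mul_delta_mx_0 // mul0mx.
by rewrite linear0 addr0 mulmx0.
Qed.

Lemma mulmx_diag_mismatch m p b c (X : 'M[F]_(m, r)) (Y : 'M[F]_(r, p)) :
  b != c -> X *m P b = X -> P c *m Y = Y -> X *m Y = 0.
Proof.
by move=> bc <- <-; rewrite -mulmxA (mulmxA (P b)) Phi_diag_orth // mul0mx mulmx0.
Qed.

Lemma hom_unitPl a c : P a *m H a c = H a c.
Proof. by rewrite /hom_unit !mulmxA Phi_diag_idem. Qed.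
Lemma hom_unitPr a c : H a c *m P c = H a c.
Proof. by rewrite /hom_unit -mulmxA Phi_diag_idem. Qed.
Lemma anti_unitPl a c : P a *m K a c = K a c.
Proof. by rewrite /anti_unit !mulmxA Phi_diag_idem. Qed.
Lemma anti_unitPr a c : K a c *m P c = K a c.
Proof. by rewrite /anti_unit -mulmxA Phi_diag_idem. Qed.

Lemma hom_unit_mismatch a b c d : b != c -> H a b *m H c d = 0.
Proof. by move=> bc; apply: (mulmx_diag_mismatch bc); rewrite ?hom_unitPr ?hom_unitPl. Qed.

Lemma anti_unit_mismatch a b c d : b != c -> K a b *m K c d = 0.
Proof. by move=> bc; apply: (mulmx_diag_mismatch bc); rewrite ?anti_unitPr ?anti_unitPl. Qed.

Lemma hom_anti_unit_mismatch a b c d : b != c -> H a b *m K c d = 0.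
Proof. by move=> bc; apply: (mulmx_diag_mismatch bc); rewrite ?hom_unitPr ?anti_unitPl. Qed.

Lemma anti_hom_unit_mismatch a b c d : b != c -> K a b *m H c d = 0.
Proof. by move=> bc; apply: (mulmx_diag_mismatch bc); rewrite ?anti_unitPr ?hom_unitPl. Qed.

(* [e a a Z e c c + e c c Z e a a] only retains the (a,c) and (c,a) entries of [Z]. *)
Lemma peirce_offdiag a c Z : a != c ->
  P a *m Phi Z *m P c = Z a c *: H a c + Z c a *: K a c.
Proof.
move=> ac; have := jordan_triple2 (e a a) Z (e c c).
move/(congr1 (fun X => P a *m X *m P c)).
rewrite mulmxDr mulmxDl !mulmxA Phi_diag_idem -!mulmxA Phi_diag_idem !mulmxA.
rewrite Phi_diag_orth // !mul0mx addr0 => <-.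
rewrite !delta_mul_mx_delta (linearD Phi) !linearZ /= mulmxDr mulmxDl.
by rewrite -!scalemxAr -!scalemxAl.
Qed.

Lemma Phi_offdiag i j : i != j -> Phi (e i j) = H i j + K j i.
Proof.
move=> ij; rewrite /hom_unit /anti_unit -jordan_triple2.
by rewrite !mul_delta_mx mul_delta_mx_0 ?mul0mx ?addr0 // eq_sym.
Qed.

Lemma peirce_mul a b c X Y :
  (P a *m Phi X *m P b) *m (P b *m Phi Y *m P c) +
  (P a *m Phi Y *m P b) *m (P b *m Phi X *m P c) =
  P a *m Phi (X *m e b b *m Y + Y *m e b b *m X) *m P c.
Proof.
rewrite jordan_triple2 mulmxDr mulmxDl !mulmxA.
by rewrite -!(mulmxA _ (P b) (P b)) Phi_diag_idem.
Qed.

Lemma hom_unit_mul a b c : a != b -> b != c -> a != c -> H a b *m H b c = H a c.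
Proof.
move=> ab bc ac; have := peirce_mul a b c (e a b) (e b c).
rewrite (peirce_offdiag (e b c) ab) !mxE; delta_simpl.
by rewrite !scale0r !mul0mx !addr0.
Qed.

Lemma anti_unit_mul a b c : a != b -> b != c -> a != c -> K a b *m K b c = K a c.
Proof.
move=> ab bc ac; have := peirce_mul a b c (e b a) (e c b).
rewrite (peirce_offdiag (e c b) ab) !mxE; delta_simpl.
by rewrite !scale0r !mul0mx !addr0.
Qed.

Lemma hom_anti_unit_mul a b c : a != b -> b != c -> H a b *m K b c = 0.
Proof.
move=> ab bc; have := peirce_mul a b c (e a b) (e c b).
rewrite (peirce_offdiag (e c b) ab) !mxE; delta_simpl.
case: (eqVneq a c) => [<-|ac]; rewrite /= ?scale0r ?scale1r ?mul0mx ?add0r ?linear0 ?mulmx0 //.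
  by rewrite !addr0 mul0mx => /(mx_double_eq0 char2).
by rewrite addr0 mul0mx.
Qed.

Lemma anti_hom_unit_mul a b c : a != b -> b != c -> K a b *m H b c = 0.
Proof.
move=> ab bc; have := peirce_mul a b c (e b a) (e b c).
rewrite (peirce_offdiag (e b c) ab) !mxE; delta_simpl.
case: (eqVneq a c) => [<-|ac]; rewrite /= ?scale0r ?scale1r ?mul0mx ?add0r ?linear0 ?mulmx0 //.
  by rewrite ?addr0 mul0mx => /(mx_double_eq0 char2).
by rewrite addr0 mul0mx.
Qed.

Lemma unit_sum_diag a b : a != b -> H a b *m H b a + K a b *m K b a = P a.
Proof.
move=> ab; have := peirce_mul a b a (e a b) (e b a); delta_simpl.
by rewrite !Phi_diag_idem.
Qed.

Lemma hom_unit_absorb a b : a != b -> H a b *m H b a *m H a b = H a b.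
Proof.
move=> ab; rewrite -[RHS]hom_unitPl -(unit_sum_diag ab) mulmxDl.
by rewrite -(mulmxA (K a b)) anti_hom_unit_mul ?mulmx0 ?addr0 // eq_sym.
Qed.

Lemma anti_unit_absorb a b : a != b -> K a b *m K b a *m K a b = K a b.
Proof.
move=> ab; rewrite -[RHS]anti_unitPl -(unit_sum_diag ab) mulmxDl.
by rewrite -(mulmxA (H a b)) hom_anti_unit_mul ?mulmx0 ?add0r // eq_sym.
Qed.

End JordanHom.

Definition mx_units (R : pzRingType) N r (E : 'I_N -> 'I_N -> 'M[R]_r) :=
  forall i j k l, E i j *m E k l = if j == k then E i l else 0.

Section CompleteUnits.
Variables (R : pzRingType) (m r : nat).
Implicit Types u v : 'I_m.+2 -> 'I_m.+2 -> 'M[R]_r.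
Local Notation i0 := (ord0 : 'I_m.+2).
Local Notation i1 := (ord_max : 'I_m.+2).

(* Only the off-diagonal [u a b] are meaningful; the full system of matrix units
   is [u i 0 *m u 0 j], with [u 0 1 *m u 1 0] standing in for [u 0 0]. *)
Definition unit_corner u := u i0 i1 *m u i1 i0.
Definition unit_col u i := if i == i0 then unit_corner u else u i i0.
Definition unit_row u j := if j == i0 then unit_corner u else u i0 j.
Definition complete_units u i j := unit_col u i *m unit_row u j.

Variable u : 'I_m.+2 -> 'I_m.+2 -> 'M[R]_r.
Hypothesis u_mul : forall a b c, a != b -> b != c -> a != c -> u a b *m u b c = u a c.
Hypothesis u_mismatch : forall a b c d, b != c -> u a b *m u c d = 0.
Hypothesis u_absorb : forall a b, a != b -> u a b *m u b a *m u a b = u a b.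

Let i01 : i0 != i1. Proof. by []. Qed.
Let i10 : i1 != i0. Proof. by []. Qed.

Lemma unit_corner_idem : unit_corner u *m unit_corner u = unit_corner u.
Proof. by rewrite /unit_corner mulmxA u_absorb. Qed.

Lemma unit_col_corner i : unit_col u i *m unit_corner u = unit_col u i.
Proof.
rewrite /unit_col; case: eqP => [_|/eqP i0']; first exact: unit_corner_idem.
rewrite /unit_corner mulmxA; case: (eqVneq i i1) => [->|i1']; first by rewrite u_absorb.
by rewrite (u_mul i0' i01 i1') (u_mul i1' i10 i0').
Qed.

Lemma unit_corner_row j : unit_corner u *m unit_row u j = unit_row u j.
Proof.
rewrite /unit_row; case: eqP => [_|/eqP j0]; first exact: unit_corner_idem.
have j0' : i0 != j by rewrite eq_sym.
rewrite /unit_corner; case: (eqVneq j i1) => [->|j1]; first by rewrite u_absorb.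
have j1' : i1 != j by rewrite eq_sym.
by rewrite -mulmxA (u_mul i10 j0' j1') (u_mul i01 j1' j0').
Qed.

Lemma unit_loop j : j != i0 -> u i0 j *m u j i0 = unit_corner u.
Proof.
move=> j0; case: (eqVneq j i1) => [-> //|j1].
have j0' : i0 != j by rewrite eq_sym.
by rewrite -(u_mul j1 i10 j0) mulmxA (u_mul j0' j1 i01).
Qed.

Lemma unit_row_col j p : unit_row u j *m unit_col u p = if j == p then unit_corner u else 0.
Proof.
rewrite /unit_row /unit_col.
case: (eqVneq j i0) => [->|j0]; case: (eqVneq p i0) => [?|p0]; subst => //.
- by rewrite unit_corner_idem.
- by rewrite /unit_corner -mulmxA u_mismatch ?mulmx0 // eq_sym.
- by rewrite (negbTE j0) /unit_corner mulmxA u_mismatch ?mul0mx.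
- by case: (eqVneq j p) => [<-|jp]; [rewrite unit_loop | rewrite u_mismatch].
Qed.

Lemma complete_unitsP : mx_units (complete_units u).
Proof.
move=> i j k l; rewrite /complete_units mulmxA -(mulmxA _ (unit_row u j)) unit_row_col.
by case: ifP; rewrite ?mulmx0 ?mul0mx // unit_col_corner.
Qed.

Lemma unit_colE i : i != i0 -> unit_col u i = u i i0.
Proof. by rewrite /unit_col => /negbTE ->. Qed.

Lemma unit_rowE j : j != i0 -> unit_row u j = u i0 j.
Proof. by rewrite /unit_row => /negbTE ->. Qed.

Lemma complete_units_offdiag i j : i != j -> complete_units u i j = u i j.
Proof.
rewrite /complete_units; case: (eqVneq i i0) => [->|i0'] ij.
  by rewrite {1}/unit_col eqxx unit_corner_row unit_rowE // eq_sym.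
case: (eqVneq j i0) => [->|j0].
  by rewrite /unit_row eqxx unit_col_corner unit_colE.
by rewrite unit_colE // unit_rowE // u_mul // eq_sym.
Qed.

Lemma complete_units_diag i j : i != j -> complete_units u i i = u i j *m u j i.
Proof.
rewrite /complete_units; case: (eqVneq i i0) => [->|i0'] ij.
  by rewrite /unit_col /unit_row eqxx unit_corner_idem unit_loop // eq_sym.
rewrite unit_colE // unit_rowE //; case: (eqVneq j i0) => [-> //|j0].
have i0i : i0 != i by rewrite eq_sym.
rewrite -(u_mul i0' _ ij) 1?eq_sym // -(u_mul j0 i0i) 1?eq_sym //.
by rewrite mulmxA -(mulmxA _ _ (u j i0)) unit_loop // -unit_colE // unit_col_corner.
Qed.

Variable v : 'I_m.+2 -> 'I_m.+2 -> 'M[R]_r.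
Hypothesis uv_mismatch : forall a b c d, b != c -> u a b *m v c d = 0.
Hypothesis uv_swap : forall a b, a != b -> u a b *m v b a = 0.

Lemma unit_row_col_orth j p : unit_row u j *m unit_col v p = 0.
Proof.
rewrite /unit_row /unit_col /unit_corner.
case: (eqVneq j i0) => [_|j0]; case: (eqVneq p i0) => [_|p0].
- by rewrite -mulmxA (mulmxA (u i1 i0)) uv_swap // mul0mx mulmx0.
- by rewrite -mulmxA uv_mismatch ?mulmx0 // eq_sym.
- by rewrite mulmxA uv_mismatch ?mul0mx.
- by case: (eqVneq j p) => [<-|jp]; [rewrite uv_swap // eq_sym | rewrite uv_mismatch].
Qed.

Lemma complete_units_orth i j k l : complete_units u i j *m complete_units v k l = 0.
Proof.
by rewrite /complete_units mulmxA -(mulmxA _ (unit_row u j)) unit_row_col_orth mulmx0 mul0mx.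
Qed.

End CompleteUnits.

Section Blocks.
Variable R : pzRingType.

Fixpoint row_blocks p q k : ('I_k -> 'M[R]_(p, q)) -> 'M[R]_(p, k * q) :=
  match k with
  | 0 => fun _ => 0
  | k'.+1 => fun f => row_mx (f ord0) (row_blocks (fun c => f (lift ord0 c)))
  end.

Fixpoint col_blocks p q k : ('I_k -> 'M[R]_(q, p)) -> 'M[R]_(k * q, p) :=
  match k with
  | 0 => fun _ => 0
  | k'.+1 => fun h => col_mx (h ord0) (col_blocks (fun c => h (lift ord0 c)))
  end.

Lemma mulmx_row_blocks0 p q s k (X : 'M[R]_(s, p)) (f : 'I_k -> 'M[R]_(p, q)) :
  (forall c, X *m f c = 0) -> X *m row_blocks f = 0.
Proof.
elim: k f => [|k IHk] f Xf0 /=; first by rewrite mulmx0.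
by rewrite mul_mx_row Xf0 IHk ?row_mx0.
Qed.

Lemma mul_col_blocks0 p q s k (h : 'I_k -> 'M[R]_(q, p)) (Y : 'M[R]_(p, s)) :
  (forall c, h c *m Y = 0) -> col_blocks h *m Y = 0.
Proof.
elim: k h => [|k IHk] h hY0 /=; first by rewrite mul0mx.
by rewrite mul_col_mx hY0 IHk ?col_mx0.
Qed.

Lemma mul_col_row_blocks p q k (h : 'I_k -> 'M[R]_(q, p)) (f : 'I_k -> 'M[R]_(p, q)) :
  (forall c c', h c *m f c' = if c == c' then 1%:M else 0) ->
  col_blocks h *m row_blocks f = 1%:M.
Proof.
elim: k h f => [|k IHk] h f hf /=; first by rewrite mulmx0; apply/matrixP => [[]].
rewrite mul_col_row hf eqxx IHk => [|c c']; last by rewrite hf (inj_eq lift_inj).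
rewrite mulmx_row_blocks0 => [|c]; last by rewrite hf.
by rewrite mul_col_blocks0 ?scalar_mx_block // => c; rewrite hf.
Qed.

Lemma mul_row_col_blocks p q s k (f : 'I_k -> 'M[R]_(p, q)) (h : 'I_k -> 'M[R]_(q, s)) :
  row_blocks f *m col_blocks h = \sum_c f c *m h c.
Proof.
elim: k f h => [|k IHk] f h /=; first by rewrite mul0mx big_ord0.
by rewrite mul_row_col IHk big_ord_recl.
Qed.

Lemma kron_idS N k (A : 'M[R]_N.+1) :
  kron_id k.+1 A = block_mx A 0 0 (kron_id k A) :> 'M[R]_(N.+1 + k * N.+1).
Proof.
have divS x : ((N.+1 + x) %/ N.+1 = (x %/ N.+1).+1)%N by rewrite divnDl ?dvdnn // divnn.
have modS x : ord_mod N (N.+1 + x) = ord_mod N x by apply: val_inj; rewrite /= modnDl.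
apply/matrixP => i j; rewrite -(splitK i) -(splitK j).
case: (split i) => i'; case: (split j) => j' /=.
- rewrite block_mxEul /kron_id !mxE /= !divn_small ?eqxx //.
  by congr (A _ _); apply: val_inj; rewrite /= modn_small.
- by rewrite block_mxEur /kron_id !mxE /= divS divn_small.
- by rewrite block_mxEdl /kron_id !mxE /= divS (divn_small (ltn_ord j')).
- by rewrite block_mxEdr /kron_id !mxE /= !divS eqSS !modS.
Qed.

Lemma mul_row_kron_col_blocks p s N k (f : 'I_k -> 'M[R]_(p, N.+1))
    (h : 'I_k -> 'M[R]_(N.+1, s)) (A : 'M[R]_N.+1) :
  row_blocks f *m kron_id k A *m col_blocks h = \sum_c f c *m A *m h c.
Proof.
elim: k f h => [|k IHk] f h; first by rewrite /= !mul0mx big_ord0.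
rewrite kron_idS [row_blocks _]/= [col_blocks _]/=.
rewrite (mul_row_block (n1 := N.+1) (n2 := k * N.+1) (p1 := N.+1) (p2 := k * N.+1)).
rewrite !mulmx0 addr0 add0r.
by rewrite (mul_row_col (n1 := N.+1) (n2 := k * N.+1)) IHk big_ord_recl.
Qed.

End Blocks.

Section ColsRowsAt.
Variables (R : comPzRingType) (N r k : nat).
Variables (a : 'I_N -> 'M[R]_(r, k)) (b : 'I_N -> 'M[R]_(k, r)).

Definition cols_at (c : 'I_k) : 'M[R]_(r, N) := \sum_i a i *m delta_mx c i.
Definition rows_at (c : 'I_k) : 'M[R]_(N, r) := \sum_j delta_mx j c *m b j.

Lemma mul_rows_cols_at c c' :
  rows_at c *m cols_at c' = \sum_j \sum_i (b j *m a i) c c' *: delta_mx j i.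
Proof.
rewrite /rows_at mulmx_suml; apply: eq_bigr => j _.
rewrite /cols_at mulmx_sumr; apply: eq_bigr => i _.
by rewrite !mulmxA -(mulmxA _ (b j)) delta_mul_mx_delta.
Qed.

Lemma sum_cols_rows_at (A : 'M[R]_N) :
  \sum_c cols_at c *m A *m rows_at c = \sum_i \sum_j A i j *: (a i *m b j).
Proof.
have expand c : cols_at c *m A *m rows_at c =
    \sum_i \sum_j A i j *: (a i *m delta_mx c c *m b j).
  rewrite /cols_at !mulmx_suml; apply: eq_bigr => i _.
  rewrite /rows_at mulmx_sumr; apply: eq_bigr => j _.
  rewrite -!mulmxA (mulmxA (delta_mx c i)) (mulmxA (delta_mx c i *m A)) delta_mul_mx_delta.
  by rewrite -scalemxAl -scalemxAr !mulmxA.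
rewrite (eq_bigr _ (fun c _ => expand c)) exchange_big; apply: eq_bigr => i _.
rewrite exchange_big; apply: eq_bigr => j _.
by rewrite -scaler_sumr -mulmx_suml -mulmx_sumr -mx1_sum_delta mulmx1.
Qed.

End ColsRowsAt.

Lemma idempotent_factor (F : fieldType) r (E : 'M[F]_r) : E *m E = E ->
  exists k (U : 'M[F]_(r, k)) (U' : 'M[F]_(k, r)), U' *m U = 1%:M /\ U *m U' = E.
Proof.
move=> EE; exists (\rank E), (col_base E), (row_base E).
move: (mulmx_base E) (col_base_full E) (mulmxVp (row_base_free E)).
move: (\rank E) (col_base E) (row_base E) (pinvmx _) => k U U' V UU' /row_fullP[C CU] U'V.
split => //; have := congr1 (fun X => C *m X *m V) EE.
by rewrite /= -UU' !mulmxA CU mul1mx -!mulmxA U'V !mulmx1.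
Qed.

Lemma mx_units_split (F : fieldType) N r (E : 'I_N.+1 -> 'I_N.+1 -> 'M[F]_r) :
  mx_units E ->
  exists k (X : 'M[F]_(r, k * N.+1)) (Y : 'M[F]_(k * N.+1, r)),
  [/\ Y *m X = 1%:M, X *m Y = \sum_i E i i &
      forall A, X *m kron_id k A *m Y = \sum_i \sum_j A i j *: E i j].
Proof.
move=> EU; have E00 : E 0 0 *m E 0 0 = E 0 0 by rewrite EU eqxx.
have [k [U [U' [U'U UU']]]] := idempotent_factor E00.
pose a i := E i 0 *m U; pose b j := U' *m E 0 j.
have ba j i : b j *m a i = if j == i then 1%:M else 0.
  rewrite /a /b mulmxA -(mulmxA U') EU; case: eqP => _; last by rewrite mulmx0 mul0mx.
  by rewrite -UU' !mulmxA U'U mul1mx U'U.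
have ab i j : a i *m b j = E i j.
  by rewrite /a /b mulmxA -(mulmxA _ U) UU' EU eqxx EU eqxx.
have fAh A : \sum_c cols_at a c *m A *m rows_at b c = \sum_i \sum_j A i j *: E i j.
  by rewrite sum_cols_rows_at; under eq_bigr do under eq_bigr do rewrite ab.
exists k, (row_blocks (cols_at a)), (col_blocks (rows_at b)); split.
- apply: mul_col_row_blocks => c c'; rewrite mul_rows_cols_at.
  rewrite (eq_bigr (fun j => (c == c')%:R *: delta_mx j j)) => [|j _].
    by rewrite -scaler_sumr -mx1_sum_delta; case: eqP; rewrite ?scale1r ?scale0r.
  rewrite (bigD1 j) //= big1 => [|i /negPf ij]; last by rewrite ba eq_sym ij mxE scale0r.
  by rewrite ba eqxx mxE addr0.
- rewrite mul_row_col_blocks.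
  under eq_bigr => c _ do rewrite -[cols_at a c]mulmx1.
  rewrite fAh; apply: eq_bigr => i _; rewrite (bigD1 i) //= big1 => [|j /negPf ij].
    by rewrite mxE eqxx scale1r addr0.
  by rewrite mxE eq_sym ij scale0r.
- by move=> A; rewrite mul_row_kron_col_blocks fAh.
Qed.

Lemma conform_mx_similar (F : fieldType) r p (S : 'M[F]_(r, p)) (T : 'M[F]_(p, r)) :
  T *m S = 1%:M -> S *m T = 1%:M ->
  exists2 S' : 'M[F]_r, S' \in unitmx &
    forall M : 'M[F]_p, S *m M *m T = S' *m conform_mx 0 M *m invmx S'.
Proof.
move=> TS ST; have pr : p = r by apply/anti_leq; rewrite (mulmx1_min TS) (mulmx1_min ST).
subst p; have [uS _] := mulmx1_unit ST.
exists S => // M; rewrite conform_mx_id.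
by rewrite -[invmx S]mul1mx -TS -(mulmxA T) mulmxV // mulmx1.
Qed.

Lemma left_invertible_similar (F : fieldType) r m (X : 'M[F]_(r, m)) (Y : 'M[F]_(m, r)) :
  Y *m X = 1%:M ->
  (m <= r)%N /\ exists2 S : 'M[F]_r, S \in unitmx & forall M : 'M[F]_m,
    X *m M *m Y = S *m conform_mx 0 (block_mx M 0 0 (0 : 'M[F]_(r - m))) *m invmx S.
Proof.
move=> YX; have le_mr := mulmx1_min YX; split => //.
(* Complete [X] by a basis of the image of the complementary idempotent [z]. *)
pose z := 1%:M - X *m Y.
have Yz : Y *m z = 0 by rewrite mulmxBr mulmx1 mulmxA YX mul1mx subrr.
have zX : z *m X = 0 by rewrite mulmxBl mul1mx -mulmxA YX mulmx1 subrr.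
have zz : z *m z = z by rewrite {1}/z mulmxBl mul1mx -mulmxA Yz mulmx0 subr0.
have [t [Z [Z' [Z'Z ZZ']]]] := idempotent_factor zz.
have YZ : Y *m Z = 0 by rewrite -[Z]mulmx1 -Z'Z !mulmxA -(mulmxA Y) ZZ' Yz !mul0mx.
have Z'X : Z' *m X = 0 by rewrite -[Z']mul1mx -Z'Z -!mulmxA (mulmxA Z) ZZ' zX !mulmx0.
have TS : col_mx Y Z' *m row_mx X Z = 1%:M.
  by rewrite mul_col_row YX YZ Z'X Z'Z -scalar_mx_block.
have ST : row_mx X Z *m col_mx Y Z' = 1%:M by rewrite mul_row_col ZZ' addrC subrK.
have mt : t = (r - m)%N.
  by apply/eqP; rewrite -(eqn_add2l m) subnKC // eqn_leq (mulmx1_min TS) (mulmx1_min ST).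
subst t; have [S uS XMY] := conform_mx_similar TS ST.
exists S => // M.
by rewrite -XMY mul_row_block !mulmx0 !addr0 mul_row_col mul0mx addr0.
Qed.

Lemma split_idem_orth (R : pzRingType) r p q (X : 'M[R]_(r, p)) (Y : 'M[R]_(p, r))
    (X' : 'M[R]_(r, q)) (Y' : 'M[R]_(q, r)) :
  Y *m X = 1%:M -> Y' *m X' = 1%:M -> X *m Y *m (X' *m Y') = 0 -> Y *m X' = 0.
Proof.
move=> YX Y'X' orth; have := congr1 (fun M => Y *m M *m X') orth.
by rewrite /= mulmx0 mul0mx !mulmxA YX mul1mx -mulmxA Y'X' mulmx1.
Qed.

Lemma std_form_of_mx_units (F : fieldType) N r (Phi : {linear 'M[F]_N.+1 -> 'M[F]_r})
    (E E' : 'I_N.+1 -> 'I_N.+1 -> 'M[F]_r) :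
  mx_units E -> mx_units E' ->
  (forall i j k l, E i j *m E' k l = 0) -> (forall i j k l, E' i j *m E k l = 0) ->
  (forall i j, Phi (delta_mx i j) = E i j + E' j i) ->
  exists (S : 'M[F]_r) (k1 k2 : nat),
    [/\ S \in unitmx, (N.+1 * k1 + N.+1 * k2 <= r)%N &
        forall A, Phi A = S *m std_form r k1 k2 A *m invmx S].
Proof.
move=> EU E'U EE' E'E PhiE.
have [k1 [X1 [Y1 [YX1 XY1 XAY1]]]] := mx_units_split EU.
have [k2 [X2 [Y2 [YX2 XY2 XAY2]]]] := mx_units_split E'U.
have orth (D D' : 'I_N.+1 -> 'I_N.+1 -> 'M[F]_r) :
    (forall i j k l, D i j *m D' k l = 0) -> (\sum_i D i i) *m (\sum_i D' i i) = 0.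
  by move=> DD'; rewrite mulmx_suml big1 // => i _; rewrite mulmx_sumr big1.
have YX : col_mx Y1 Y2 *m row_mx X1 X2 = 1%:M.
  rewrite mul_col_row YX1 YX2 (split_idem_orth YX1 YX2) ?(split_idem_orth YX2 YX1) ?XY1 ?XY2 ?orth //.
  by rewrite -scalar_mx_block.
have [le [S uS XMY]] := left_invertible_similar YX.
exists S, k1, k2; split => //; first by rewrite mulnC (mulnC _ k2).
(* [std_form] sizes its blocks as [n * k], while [kron_id] produces [k * n]. *)
move=> A; rewrite /std_form [(N.+1 * k1)%N]mulnC [(N.+1 * k2)%N]mulnC -XMY.
rewrite mul_row_block !mulmx0 addr0 add0r mul_row_col XAY1 XAY2.
rewrite {1}(matrix_sum_delta A) linear_sum [X in _ = _ + X]exchange_big -big_split.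
apply: eq_bigr => i _; rewrite linear_sum -big_split; apply: eq_bigr => j _.
by rewrite linearZ /= PhiE scalerDr mxE.
Qed.

Section JordanUnits.
Variables (F : fieldType) (m r : nat).
Hypothesis char2 : (2%:R : F) != 0.
Variable Phi : {linear 'M[F]_m.+2 -> 'M[F]_r}.
Hypothesis Phi_jordan : jordan_hom Phi.
Local Notation H := (hom_unit Phi).
Local Notation K := (anti_unit Phi).

Let H_mul := hom_unit_mul char2 Phi_jordan.
Let K_mul := anti_unit_mul char2 Phi_jordan.
Let H_absorb := hom_unit_absorb char2 Phi_jordan.
Let K_absorb := anti_unit_absorb char2 Phi_jordan.

Lemma hom_unitsP : mx_units (complete_units H).
Proof. exact: complete_unitsP H_mul (hom_unit_mismatch char2 Phi_jordan) H_absorb. Qed.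

Lemma anti_unitsP : mx_units (complete_units K).
Proof. exact: complete_unitsP K_mul (anti_unit_mismatch char2 Phi_jordan) K_absorb. Qed.

Lemma hom_anti_units_orth i j k l : complete_units H i j *m complete_units K k l = 0.
Proof.
apply: complete_units_orth => [a b c d|a b ab].
  exact: (hom_anti_unit_mismatch char2 Phi_jordan).
by rewrite (hom_anti_unit_mul char2 Phi_jordan ab) // eq_sym.
Qed.

Lemma anti_hom_units_orth i j k l : complete_units K i j *m complete_units H k l = 0.
Proof.
apply: complete_units_orth => [a b c d|a b ab].
  exact: (anti_hom_unit_mismatch char2 Phi_jordan).
by rewrite (anti_hom_unit_mul char2 Phi_jordan ab) // eq_sym.
Qed.

Lemma Phi_delta_units i j :
  Phi (delta_mx i j) = complete_units H i j + complete_units K j i.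
Proof.
have [<-|ij] := eqVneq i j.
  pose k : 'I_m.+2 := if i == ord0 then ord_max else ord0.
  have ik : i != k by rewrite /k; case: (eqVneq i ord0) => [->|].
  rewrite (complete_units_diag H_mul H_absorb ik) (complete_units_diag K_mul K_absorb ik).
  by rewrite unit_sum_diag.
rewrite (Phi_offdiag char2 Phi_jordan ij) (complete_units_offdiag H_mul H_absorb ij).
by rewrite (complete_units_offdiag K_mul K_absorb) // eq_sym.
Qed.

End JordanUnits.

Lemma conform_mx00 (R : pzRingType) m n m' n' :
  conform_mx (0 : 'M[R]_(m, n)) (0 : 'M[R]_(m', n')) = 0.
Proof.
rewrite /conform_mx; case: eqP => // e1; case: eqP => // e2.
by apply/matrixP => i j; rewrite castmxE !mxE.
Qed.

Theorem theorem4p5 (F : fieldType) (n r : nat)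
  (char2 : (2%:R : F) != 0)
  (Phi : {linear 'M[F]_n -> 'M[F]_r})
  (hidem : forall A : 'M[F]_n, A *m A = A -> Phi A *m Phi A = Phi A) :
  jordan_hom Phi /\
  exists (S : 'M[F]_r) (k1 k2 : nat),
    [/\ S \in unitmx, (n * k1 + n * k2 <= r)%N &
        forall A : 'M[F]_n, Phi A = S *m std_form r k1 k2 A *m invmx S].
Proof.
have Phi_jordan := idempotent_preserving_jordan char2 hidem.
split => //; case: n Phi hidem Phi_jordan => [|[|m]] Phi hidem Phi_jordan.
- exists 1%:M, 0%N, 0%N; split => [||A]; rewrite ?unitmx1 //.
  by rewrite invmx1 mul1mx mulmx1 flatmx0 linear0 /std_form /= !block_mx0 conform_mx00.
-
  pose P := Phi (delta_mx 0 0).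
  apply: (@std_form_of_mx_units _ _ _ _ (fun _ _ => P) (fun _ _ => 0)).
  + by move=> i j k l; rewrite !ord1 eqxx hidem // mul_delta_mx.
  + by move=> i j k l; rewrite mulmx0; case: ifP.
  + by move=> i j k l; rewrite mulmx0.
  + by move=> i j k l; rewrite mul0mx.
  + by move=> i j; rewrite !ord1 addr0.
apply: std_form_of_mx_units (Phi_delta_units char2 Phi_jordan).
- exact: hom_unitsP.
- exact: anti_unitsP.
- exact: hom_anti_units_orth.
- exact: anti_hom_units_orth.
Qed.
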